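(* The functor $\Theta:\mathbf{FinGraph}^l_\star\to\mathbf{FinArb}^<_\star$ (defined below) is well-defined: for every connected, finite, pointed, edge-ordered graph $G$, $\Theta(G)$ is a finite edge-ordered arborescence, and for every lex-homomorphism $h:G\to H$, $\Theta(h)$ is a homomorphism of pointed edge-ordered graphs $\Theta(G)\to\Theta(H)$.
   Context: A (directed) graph is $(V,\to)$ with $\to\subseteq V\times V$; $N(u)$ is the set of outgoing edges of $u$. A pointed graph has a distinguished vertex $v_0$; connected means every vertex is reachable by a path from $v_0$. A path is a finite sequence $v_1\to\cdots\to v_n$ of vertices joined by edges; proper if no vertex repeats; co-initial paths share their source; $\pi\sqsubset\sigma$ means $\pi$ is a proper prefix of $\sigma$. A finite edge-ordered graph is a finite graph with a strict linear order $\triangleleft$ on each neighborhood. Lexicographic path order: if $\pi\sqsubset\sigma$ then $\pi\prec\sigma$ (symmetrically); otherwise, with $\zeta$ the longest common prefix, $u$ its target and $v_1,v_2$ the next vertices, $\pi\prec\sigma$ iff $u\to v_1\triangleleft u\to v_2$. $\min(u\rightsquigarrow v)$ is the $\prec$-least proper path from $u$ to $v$. A homomorphism of finite pointed edge-ordered graphs $h:G\to H$ is a vertex map with (i) $u\to v$ implies $h(u)\to h(v)$; (ii) the distinguished vertex of $G$ is the unique vertex mapped to the distinguished vertex of $H$; (iii) $u\to v_1\triangleleft u\to v_2$ implies $h(u)\to h(v_1)\triangleleft h(u)\to h(v_2)$. A lex-homomorphism additionally satisfies (iv) $h(\min(u\rightsquigarrow v))=\min(h(u)\rightsquigarrow h(v))$,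 where $h$ is applied to paths vertexwise. An arborescence is a pointed graph with a unique path $v_0\rightsquigarrow u$ for every vertex $u$. $\mathbf{FinGraph}^l_\star$: connected, finite, pointed, edge-ordered graphs with lex-homomorphisms; $\mathbf{FinArb}^<_\star$: finite edge-ordered arborescences with homomorphisms of pointed edge-ordered graphs. $\Theta(G)$ has the vertices and distinguished vertex of $G$, contains an edge $u\to v$ iff $u\to v$ is an edge of $\min(v_0\rightsquigarrow v)$ in $G$, and orders co-initial edges as in $G$; $\Theta(h)(v)=h(v)$. *)

From mathcomp Require Import all_boot.
Unset Printing Implicit Defensive.

(* Edges are a (Prop) relation on a
   finite vertex type; [eord u a b] means  u->a  <|  u->b  (the edge order on
   the neighbourhood N(u), edges being identified with their targets). *)
Record pegraph := PEGraph {
  vert : finType;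
  edge : vert -> vert -> Prop;
  root : vert;
  eord : vert -> vert -> vert -> Prop }.

Definition edge_ordered (G : pegraph) : Prop :=
  forall u : vert G,
    (forall a b, @eord G u a b -> @edge G u a /\ @edge G u b) /\
    (forall a, ~ @eord G u a a) /\
    (forall a b c, @eord G u a b -> @eord G u b c -> @eord G u a c) /\
    (forall a b, @edge G u a -> @edge G u b -> a <> b ->
                 @eord G u a b \/ @eord G u b a).

(* The sequence of vertices  u :: s  is a path (consecutive vertices joined by
   edges). A path is represented by its source u and the list s of the
   remaining vertices; its target is  last u s. *)
Fixpoint gpath {V : Type} (e : V -> V -> Prop) (u : V) (s : seq V) : Prop :=
  match s with
  | [::] => True
  | x :: s' => e u x /\ gpath e x s'
  end.

Definition path_to (G : pegraph) (u v : vert G) (s : seq (vert G)) : Prop :=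
  gpath (@edge G) u s /\ last u s = v.

Definition proper_path_to (G : pegraph) (u v : vert G) (s : seq (vert G)) : Prop :=
  path_to G u v s /\ uniq (u :: s).

Definition connected (G : pegraph) : Prop :=
  forall v : vert G, exists s, path_to G (root G) v s.

Fixpoint lexlt {V : eqType} (o : V -> V -> V -> Prop) (u : V) (s t : seq V)
  : Prop :=
  match s, t with
  | [::], [::] => False
  | [::], _ :: _ => True
  | _ :: _, [::] => False
  | x :: s', y :: t' => if x == y then lexlt o x s' t' else o u x y
  end.

Definition is_min_path (G : pegraph) (u v : vert G) (s : seq (vert G)) : Prop :=
  proper_path_to G u v s /\
  forall t, proper_path_to G u v t -> t = s \/ lexlt (@eord G) u s t.

Definition theta_edge (G : pegraph) (u v : vert G) : Prop :=
  exists s, is_min_path G (root G) v s /\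
            exists a b, root G :: s = a ++ u :: v :: b.

Definition Theta (G : pegraph) : pegraph :=
  @PEGraph (vert G) (theta_edge G) (root G)
    (fun u a b => @eord G u a b /\ theta_edge G u a /\ theta_edge G u b).

Definition arborescence (G : pegraph) : Prop :=
  forall u : vert G, exists! s, path_to G (root G) u s.

Definition pe_hom (G H : pegraph) (h : vert G -> vert H) : Prop :=
  (forall u v, @edge G u v -> @edge H (h u) (h v)) /\
  (forall v, h v = root H <-> v = root G) /\
  (forall u a b, @eord G u a b -> @eord H (h u) (h a) (h b)).

Definition lex_hom (G H : pegraph) (h : vert G -> vert H) : Prop :=
  pe_hom G H h /\
  (forall u v s, is_min_path G u v s -> is_min_path H (h u) (h v) (map h s)).

From Pilot Require Import Defs.
From mathcomp Require Import all_boot.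
From Stdlib Require Import Classical.

Set Implicit Arguments.
Unset Strict Implicit.

(* A prefix of a lex-minimal proper path is again lex-minimal: a lex-smaller
   proper path to the intermediate vertex branches off to the left, and
   rerouting the original path along that branch (then removing cycles)
   yields a lex-smaller proper path to the final vertex.  Hence the edges of
   the minimal paths min(v0 ~> v) form a tree: every non-root vertex v has a
   unique parent, namely its predecessor on min(v0 ~> v), and no edge enters
   the root.  Homomorphisms preserve this tree because lex-homomorphisms map
   minimal paths to minimal paths. *)

Section GraphPaths.
Variable V : Type.
Implicit Types (e : V -> V -> Prop) (u : V) (s t : seq V).

Lemma gpath_cat e u s t :
  gpath e u (s ++ t) <-> gpath e u s /\ gpath e (last u s) t.
Proof. by elim: s u => [|x s IH] u /=; rewrite ?IH; tauto. Qed.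

Lemma gpath_rcons e u s z :
  gpath e u (rcons s z) <-> gpath e u s /\ e (last u s) z.
Proof. by rewrite -cats1 gpath_cat /=; tauto. Qed.

Lemma gpath_infix e u s a x y b :
  gpath e u s -> u :: s = a ++ x :: y :: b -> e x y.
Proof.
elim: a u s => [|z a IH] u s /=.
  by move=> ps [<- es]; move: ps; rewrite es => -[].
case: s => [|w s] ps [_ es]; first by case: a es {IH} => [|? []].
exact: IH ps.2 es.
Qed.

Lemma gpath_of_infix e u s :
  (forall a x y b, u :: s = a ++ x :: y :: b -> e x y) -> gpath e u s.
Proof.
elim: s u => [|y s IH] u exy //=; split; first exact: (exy [::]).
by apply: IH => a x z b es; apply: (exy (u :: a)); rewrite es.
Qed.

Lemma gpath_from_root_unique e r :
  (forall u u' v, e u v -> e u' v -> u = u') -> (forall u, ~ e u r) ->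
  forall s t, gpath e r s -> gpath e r t -> last r s = last r t -> s = t.
Proof.
move=> in_uniq no_in s; elim/last_ind: s => [|s z IH] t; case/lastP: t => [|t z'] //.
- move=> _ /gpath_rcons [_ e_r]; rewrite /= last_rcons => erz.
  by rewrite -erz in e_r; case: (no_in _ e_r).
- move=> /gpath_rcons [_ e_r] _; rewrite /= last_rcons => ezr.
  by rewrite ezr in e_r; case: (no_in _ e_r).
move=> /gpath_rcons [ps es] /gpath_rcons [pt et]; rewrite !last_rcons => ezz'.
by rewrite ezz' in es *; rewrite (IH t ps pt (in_uniq _ _ _ es et)).
Qed.

End GraphPaths.

Lemma gpath_shorten {V : eqType} (e : V -> V -> Prop) u s : gpath e u s ->
  exists2 r, [/\ gpath e u r, last u r = last u s & uniq (u :: r)] &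
             {subset u :: r <= u :: s}.
Proof.
elim: s u => [|y s IH] u /=; first by move=> _; exists [::].
move=> [uy /IH [r [pr lr ur] sub_r]].
have sub_cons z : z \in y :: r -> z \in u :: y :: s.
  by move/sub_r => zs; rewrite in_cons zs orbT.
case/boolP: (u \in y :: r) => [u_r | u_r]; last first.
  exists (y :: r); first by split => //=; rewrite u_r.
  by move=> z; rewrite in_cons => /orP[/eqP-> | /sub_cons //]; exact: mem_head.
have [r1 [r2 yr]] : exists r1 r2, y :: r = r1 ++ u :: r2.
  by case/splitPr: u_r => r1 r2; exists r1, r2.
exists r2; first split.
- move: yr pr; case: r1 => [|z r1] /= [-> ->] //.
  by rewrite gpath_cat => -[_ []].
- by rewrite -lr -[last y r]/(last u (y :: r)) yr last_cat.
- by move: ur; rewrite yr cat_uniq => /and3P[].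
move=> z; rewrite in_cons => /orP[/eqP-> | zr2]; first exact: mem_head.
by apply: sub_cons; rewrite yr mem_cat in_cons zr2 !orbT.
Qed.

Section LexOrder.
Variables (V : eqType) (o : V -> V -> V -> Prop).
Implicit Types (u x y : V) (s t r a b c : seq V).

Lemma lexlt_irr u s : ~ lexlt o u s s.
Proof. by elim: s u => [|x s IH] u //=; rewrite eqxx. Qed.

Lemma lexlt_branch u c x y a b : x <> y -> o (last u c) x y ->
  lexlt o u (c ++ x :: a) (c ++ y :: b).
Proof.
elim: c u => [|z c IH] u /= nxy; last by rewrite eqxx; apply: IH.
by case: eqP.
Qed.

Lemma lexlt_prefix_or_branch u s t : lexlt o u s t ->
  (exists d, t = s ++ d) \/
  exists c x y a b, [/\ s = c ++ x :: a, t = c ++ y :: b, x <> y & o (last u c) x y].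
Proof.
elim: s u t => [|x s IH] u [|y t] //=; first by left; exists (y :: t).
case: eqP => [<- /IH [[d ->] | [c [x' [y' [a [b [-> -> ? ?]]]]]]] | nxy oxy].
- by left; exists d.
- by right; exists (x :: c), x', y', a, b.
- by right; exists [::], x, y, s, t.
Qed.

Hypotheses (o_irr : forall u x, ~ o u x x)
           (o_trans : forall u x y z, o u x y -> o u y z -> o u x z).

Lemma lexlt_trans u s t r : lexlt o u s t -> lexlt o u t r -> lexlt o u s r.
Proof.
elim: s u t r => [|x s IH] u [|y t] [|z r] //=.
case: (x =P y) => [<-|nxy].
  by case: (x =P z) => // _; apply: IH.
case: (y =P z) => [<-|_]; first by case: (x =P y).
case: (x =P z) => [<- oxy oyx|_ oxy oyz]; last exact: o_trans oxy oyz.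
by case: (o_irr (o_trans oxy oyx)).
Qed.

End LexOrder.

Section FiniteMinimum.
Variables (T : eqType) (P : T -> Prop) (lt : T -> T -> Prop).
Hypotheses (lt_trans : forall a b c, P a -> P b -> P c -> lt a b -> lt b c -> lt a c)
           (lt_total : forall a b, P a -> P b -> a <> b -> lt a b \/ lt b a).

Lemma seq_has_min (L : seq T) t0 : P t0 -> t0 \in L ->
  exists2 m, P m & forall t, P t -> t \in L -> t = m \/ lt m t.
Proof.
elim: L t0 => [|x L IH] t0 // Pt0 t0xL.
case: (classic (exists2 t, P t & t \in L)) => [[t1 Pt1 t1L] | noL]; last first.
  have ext0 : t0 = x.
    by move: t0xL; rewrite in_cons => /orP[/eqP //|t0L]; case: noL; exists t0.
  exists x => [|t Pt]; first by rewrite -ext0.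
  by rewrite in_cons => /orP[/eqP->|tL]; [left | case: noL; exists t].
have [m Pm min_m] := IH t1 Pt1 t1L.
case: (classic (P x /\ lt x m)) => [[Px lxm] | not_lxm].
  exists x => // t Pt; rewrite in_cons => /orP[/eqP-> | /(min_m t Pt) [->|lmt]].
  + by left.
  + by right.
  + by right; exact: lt_trans Px Pm Pt lxm lmt.
exists m => // t Pt; rewrite in_cons => /orP[/eqP etx | /(min_m t Pt) //]; subst t.
have [<-|nmx] := classic (x = m); first by left.
by case: (lt_total Pt Pm nmx) => [lxm|]; [case: not_lxm | right].
Qed.

End FiniteMinimum.

Fixpoint seqs_upto (V : finType) (n : nat) : seq (seq V) :=
  if n is n'.+1 then [::] :: [seq x :: t | x <- enum V, t <- seqs_upto V n']
  else [:: [::]].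

Lemma mem_seqs_upto (V : finType) n (s : seq V) : size s <= n -> s \in seqs_upto V n.
Proof.
elim: n s => [|n IH] [|x t] //= st; rewrite in_cons; apply/orP; right.
by apply: (allpairs_f (fun x t => x :: t)); [rewrite mem_enum | apply: IH].
Qed.

Section MinimalPaths.
Variable G : pegraph.
Hypothesis eoG : edge_ordered G.
Local Notation E := (@edge G).
Local Notation O := (@eord G).
Implicit Types (u v w x y : vert G) (s t p q a b c : seq (vert G)).

Lemma eord_irr u x : ~ O u x x.
Proof. by have [_ []] := eoG u. Qed.

Lemma eord_trans u x y z : O u x y -> O u y z -> O u x z.
Proof. by have [_ [_ [trans _]]] := eoG u; apply: trans. Qed.

Lemma lexlt_gpath_total u s t : gpath E u s -> gpath E u t -> s <> t ->
  lexlt O u s t \/ lexlt O u t s.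
Proof.
elim: s u t => [|x s IH] u [|y t] /= ps pt nst; [by [] | by left | by right |].
move: ps pt => [ux ps] [uy pt]; case: (x =P y) => [exy|nxy].
  by rewrite -exy eqxx in pt nst *; apply: IH => // est; apply: nst; rewrite est.
case: (y =P x) => [eyx|_]; first by case: nxy.
by have [_ [_ [_ /(_ x y ux uy nxy)]]] := eoG u.
Qed.

Let lexltT := lexlt_trans eord_irr eord_trans.

Lemma min_path_exists u v s :
  proper_path_to G u v s -> exists m, is_min_path G u v m.
Proof.
move=> Ps; pose L := seqs_upto (vert G) #|vert G|.
have in_L t : proper_path_to G u v t -> t \in L.
  move=> [_ ut]; apply/mem_seqs_upto/ltnW.
  by rewrite -[_.+1]/(size (u :: t)) -(card_uniqP ut) max_card.
have [m Pm min_m] := @seq_has_min _ (proper_path_to G u v) (lexlt O u)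
  (fun a b c _ _ _ => @lexltT u a b c)
  (fun a b Pa Pb => lexlt_gpath_total Pa.1.1 Pb.1.1) _ _ Ps (in_L s Ps).
by exists m; split => // t Pt; apply: min_m Pt (in_L t Pt).
Qed.

Lemma min_path_unique u v s t :
  is_min_path G u v s -> is_min_path G u v t -> s = t.
Proof.
move=> [Ps min_s] [Pt min_t].
case: (min_s t Pt) => [->//|lst]; case: (min_t s Ps) => [//|lts].
by case: (lexlt_irr (lexltT lst lts)).
Qed.

Lemma proper_path_prefix u v p w q :
  proper_path_to G u v (p ++ w :: q) -> proper_path_to G u w (rcons p w).
Proof.
rewrite -cat_rcons => -[[/gpath_cat [prw _] _] uniq_pwq].
split; first by split; rewrite ?last_rcons.
by move: uniq_pwq; rewrite -cat_cons cat_uniq => /and3P[].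
Qed.

Lemma proper_lexlt_branch u w s t :
  proper_path_to G u w s -> proper_path_to G u w t -> lexlt O u s t ->
  exists c x y a b,
    [/\ s = c ++ x :: a, t = c ++ y :: b, x <> y & O (last u c) x y].
Proof.
move=> [[_ ls] _] [[_ lt] ut] lst.
case: (lexlt_prefix_or_branch lst) => [[[|z d] etd]|//]; exfalso.
  by rewrite cats0 in etd; rewrite etd in lst; case: (lexlt_irr lst).
have w_d : w \in z :: d by rewrite -lt etd last_cat /= mem_last.
have w_s : w \in u :: s by rewrite -ls mem_last.
move: ut; rewrite etd -cat_cons cat_uniq => /and3P[_ /hasPn /(_ w w_d) + _].
by rewrite w_s.
Qed.

Lemma proper_path_reroute u w v c x a q :
  proper_path_to G u w (c ++ x :: a) -> gpath E w q -> last w q = v ->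
  {in q, forall z, z \notin u :: c} ->
  exists r, proper_path_to G u v (c ++ x :: r).
Proof.
move=> [[/gpath_cat [pc [cx pa]] la] uca] pq lq q_new.
rewrite last_cat /= in la.
have /gpath_shorten [r [pr lr ur] sub_r] : gpath E x (a ++ q).
  by apply/gpath_cat; rewrite la.
exists r; split; first split.
- by apply/gpath_cat.
- by rewrite last_cat /= lr last_cat la.
rewrite -cat_cons cat_uniq in uca; case/and3P: uca => uc /hasPn xa_new _.
rewrite -cat_cons cat_uniq uc ur andbT.
by apply/hasPn => z /sub_r; rewrite -cat_cons mem_cat => /orP[/xa_new | /q_new].
Qed.

Lemma min_path_prefix u v p w q :
  is_min_path G u v (p ++ w :: q) -> is_min_path G u w (rcons p w).
Proof.
move=> [Ps min_s]; have Pp := proper_path_prefix Ps.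
split=> // t Pt; case: (t =P rcons p w) => [->|ntp]; first by left.
case: (lexlt_gpath_total Pt.1.1 Pp.1.1 ntp) => [ltp|]; last by right.
have [c [x [y [a [b [etc epc nxy oxy]]]]]] := proper_lexlt_branch Pt Pp ltp.
have [[ps ls] us] := Ps.
have eps : p ++ w :: q = c ++ y :: b ++ q by rewrite -cat_rcons epc -catA.
have [pq lq] : gpath E w q /\ last w q = v.
  by move: ps ls; rewrite -cat_rcons gpath_cat last_cat last_rcons => -[_ ?] ?.
have q_new : {in q, forall z, z \notin u :: c}.
  move: us; rewrite eps -cat_cons cat_uniq => /and3P[_ /hasPn new _] z zq.
  by apply: new; rewrite in_cons mem_cat zq !orbT.
rewrite etc in Pt; have [r Pr] := proper_path_reroute Pt pq lq q_new.
have lrs : lexlt O u (c ++ x :: r) (p ++ w :: q) by rewrite eps; apply: lexlt_branch.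
case: (min_s _ Pr) => [er|lsr]; first by rewrite er in lrs; case: (lexlt_irr lrs).
by case: (lexlt_irr (lexltT lsr lrs)).
Qed.

Lemma min_path_infix u v s a x y b :
  is_min_path G u v s -> u :: s = a ++ x :: y :: b ->
  exists2 p, is_min_path G u y (rcons p y) & last u p = x.
Proof.
move=> Ms; case: a => [|z a] /=.
  move=> [<- es]; exists [::] => //.
  by apply: (@min_path_prefix _ v [::] _ b); rewrite -es.
move=> [_ es]; exists (rcons a x); last exact: last_rcons.
by apply: (@min_path_prefix _ v _ _ b); rewrite cat_rcons -es.
Qed.

Local Notation v0 := (Defs.root G).

Lemma theta_edge_parent u v : theta_edge G u v ->
  exists2 p, is_min_path G v0 v (rcons p v) & last v0 p = u.
Proof. by move=> [s [Ms [a [b es]]]]; apply: min_path_infix Ms es. Qed.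

Lemma theta_edge_of_min_path v s a x y b :
  is_min_path G v0 v s -> v0 :: s = a ++ x :: y :: b -> theta_edge G x y.
Proof.
move=> Ms /(min_path_infix Ms) [p Mp lp]; exists (rcons p y); split => //.
by exists (belast v0 p), [::]; rewrite -lp -rcons_cons (lastI v0 p) -!cats1 -catA.
Qed.

Lemma theta_edge_edge u v : theta_edge G u v -> E u v.
Proof. by move=> [s [[[[ps _] _] _] [a [b es]]]]; apply: gpath_infix ps es. Qed.

Lemma theta_edge_not_root u : ~ theta_edge G u v0.
Proof.
by case/theta_edge_parent => p [[_ /andP[]]]; rewrite mem_rcons mem_head.
Qed.

Lemma theta_edge_in_unique u u' v : theta_edge G u v -> theta_edge G u' v -> u = u'.
Proof.
move=> /theta_edge_parent [p Mp <-] /theta_edge_parent [p' Mp' <-].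
by rewrite (rcons_injl v (min_path_unique Mp Mp')).
Qed.

Lemma Theta_edge_ordered : edge_ordered (Theta G).
Proof.
move=> u; have [_ [irr [trans total]]] := eoG u.
split; first by move=> a b [_ []].
split; first by move=> a [/irr].
split.
  by move=> a b c [oab [ua _]] [obc [_ uc]]; split; first exact: trans oab obc.
move=> a b ua ub nab.
by case: (total a b (theta_edge_edge ua) (theta_edge_edge ub) nab); [left | right].
Qed.

Hypothesis conG : connected G.

Lemma min_path_from_root v : exists s, is_min_path G v0 v s.
Proof.
have [s [ps ls]] := conG v; have [r [pr lr ur] _] := gpath_shorten ps.
by apply: (@min_path_exists _ _ r); split; first split; rewrite // lr.
Qed.

Lemma Theta_arborescence : arborescence (Theta G).
Proof.
move=> v; have [s Ms] := min_path_from_root v; have [[[_ ls] _] _] := Ms.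
have ts : gpath (theta_edge G) v0 s.
  by apply: gpath_of_infix => a x y b; apply: theta_edge_of_min_path Ms.
exists s; split => [//|t [pt lt]].
apply: (gpath_from_root_unique theta_edge_in_unique theta_edge_not_root ts pt).
by rewrite ls.
Qed.

End MinimalPaths.

Lemma lex_hom_Theta G H h : lex_hom G H h -> pe_hom (Theta G) (Theta H) h.
Proof.
move=> [[_ [h_root h_ord]] h_min].
have h_v0 : h (Defs.root G) = Defs.root H by apply/h_root.
have h_theta u v : theta_edge G u v -> theta_edge H (h u) (h v).
  move=> [s [Ms [a [b es]]]]; exists (map h s).
  split; first by rewrite -h_v0; apply: h_min.
  by exists (map h a), (map h b); rewrite -h_v0 -map_cons es map_cat.
split; [exact: h_theta | split => // u a b [oab [ua ub]]].
by split; [apply: h_ord | split; apply: h_theta].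
Qed.

Theorem lemma10p3 :
  (forall G : pegraph, edge_ordered G -> connected G ->
     edge_ordered (Theta G) /\ arborescence (Theta G)) /\
  (forall (G H : pegraph) (h : vert G -> vert H),
     edge_ordered G -> connected G -> edge_ordered H -> connected H ->
     lex_hom G H h ->
     pe_hom (Theta G) (Theta H) h).
Proof.
split=> [G eoG conG | G H h _ _ _ _ /lex_hom_Theta //].
by split; [apply: Theta_edge_ordered | apply: Theta_arborescence].
Qed.
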